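(* Let $A,B$ be finite groups equipped with probability measures $\mu$ on $A$ and $\nu$ on $B$. Let $(\mathcal{M},\tau)$ be a von Neumann algebra with a normal faithful tracial state and $U:A\to\mathcal{U}(\mathcal{M})$, $V:B\to\mathcal{U}(\mathcal{M})$ group homomorphisms. Then \[\mathbf{E}_{a\in A,b\in B}\|[U(a),V(b)]\|_2^2\leq\kappa(\mu)\kappa(\nu)\int\|[U(a),V(b)]\|_2^2\,d\mu(a)\,d\nu(b).\]
   Context: $\|x\|_2=\tau(x^*x)^{1/2}$, $[x,y]=xy-yx$, $\mathbf{E}$ is the average for the uniform probability measure. For a countable group $G$ and a probability measure $\mu$ on $G$, $\kappa(\mu)$ is the smallest number $\kappa\in[0,+\infty]$ such that for every unitary representation $(\pi,\mathcal{H})$ of $G$ and every $\xi\in\mathcal{H}$, $\|\xi-P_{\mathcal{H}^\pi}\xi\|^2\leq\frac{\kappa}{2}\int_G\|\pi(g)\xi-\xi\|^2d\mu(g)$, where $\mathcal{H}^\pi$ is the space of $\pi(G)$-invariant vectors and $P_{\mathcal{H}^\pi}$ the orthogonal projection onto it ($\kappa(\mu)=+\infty$ if no finite constant works, e.g. if the support of $\mu$ does not generate $G$; in that case the right-hand side of the claim is interpreted as $+\infty$). *)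

From HB Require Import structures.
From mathcomp Require Import all_boot all_order all_algebra all_fingroup.
From mathcomp Require Import complex.
From mathcomp Require Import boolp classical_sets reals constructive_ereal ereal.

Set Implicit Arguments.
Unset Strict Implicit.
Unset Printing Implicit Defensive.

Import Order.TTheory GRing.Theory Num.Theory.
Local Open Scope ring_scope.

Record hilbert (R : realType) (H : lmodType R[i]) := Hilbert {
  ip : H -> H -> R[i];
  ip_linear : forall (a : R[i]) (x y z : H), ip (a *: x + y) z = a * ip x z + ip y z;
  ip_conj : forall x y : H, ip y x = (ip x y)^*;
  ip_ge0 : forall x : H, 0 <= ip x x;
  ip_eq0 : forall x : H, ip x x = 0 -> x = 0;
  ip_complete : forall u : nat -> H,
    (forall e : R, 0 < e -> exists N : nat, forall m n : nat, (N <= m)%N -> (N <= n)%N ->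
        Num.sqrt (complex.Re (ip (u m - u n) (u m - u n))) < e) ->
    exists l : H, forall e : R, 0 < e -> exists N : nat, forall n : nat, (N <= n)%N ->
        Num.sqrt (complex.Re (ip (u n - l) (u n - l))) < e
}.

Definition hnorm (R : realType) (H : lmodType R[i]) (h : hilbert H) (x : H) : R :=
  Num.sqrt (complex.Re (ip h x x)).

Definition unitary_rep (R : realType) (G : finGroupType) (H : lmodType R[i])
    (h : hilbert H) (pi : G -> H -> H) : Prop :=
  [/\ (forall g (a : R[i]) (x y : H), pi g (a *: x + y) = a *: pi g x + pi g y),
      (forall g (x y : H), ip h (pi g x) (pi g y) = ip h x y),
      (forall g, forall y : H, exists x : H, pi g x = y),
      (forall x : H, pi 1%g x = x) &
      (forall g1 g2 (x : H), pi (g1 * g2)%g x = pi g1 (pi g2 x))].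

Definition prob_measure (R : realType) (G : finGroupType) (mu : G -> R) : Prop :=
  (forall g, 0 <= mu g) /\ \sum_(g : G) mu g = 1.

(* k is an admissible constant in the definition of kappa(mu):
   for every unitary representation (pi, H) and xi in H,
   ||xi - P xi||^2 <= k/2 * int ||pi(g) xi - xi||^2 dmu(g),
   where P xi is the orthogonal projection of xi onto the invariant vectors,
   i.e. the (unique) invariant eta with xi - eta orthogonal to all invariant vectors. *)
Definition kappa_admissible (R : realType) (G : finGroupType) (mu : G -> R) (k : R) : Prop :=
  forall (H : lmodType R[i]) (h : hilbert H) (pi : G -> H -> H),
    unitary_rep h pi ->
    forall xi eta : H,
      (forall g, pi g eta = eta) ->
      (forall zeta : H, (forall g, pi g zeta = zeta) -> ip h (xi - eta) zeta = 0) ->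
      hnorm h (xi - eta) ^+ 2
        <= k / 2 * \sum_(g : G) mu g * hnorm h (pi g xi - xi) ^+ 2.

(* kappa(mu) in [0, +oo]: the smallest admissible constant (+oo if none). *)
Definition kappa (R : realType) (G : finGroupType) (mu : G -> R) : \bar R :=
  ereal_inf [set (k%:E) | k in [set k : R | 0 <= k /\ kappa_admissible mu k]].

(* This is the part of the structure of a tracial von Neumann
   algebra (M, tau) used in the statement. *)
Record tracial_star (R : realType) (M : algType R[i]) := TracialStar {
  star : M -> M;
  starD : forall x y : M, star (x + y) = star x + star y;
  starZ : forall (a : R[i]) (x : M), star (a *: x) = a^* *: star x;
  starM : forall x y : M, star (x * y) = star y * star x;
  starK : forall x : M, star (star x) = x;
  tau : M -> R[i];
  tau_linear : forall (a : R[i]) (x y : M), tau (a *: x + y) = a * tau x + tau y;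
  tau1 : tau 1 = 1;
  tauC : forall x y : M, tau (x * y) = tau (y * x);
  tau_pos : forall x : M, 0 <= tau (star x * x);
  tau_faithful : forall x : M, tau (star x * x) = 0 -> x = 0;
  tau_bounded : forall x : M, exists c : R, forall y : M,
      complex.Re (tau (star (x * y) * (x * y))) <= c * complex.Re (tau (star y * y))
}.

Definition norm2 (R : realType) (M : algType R[i]) (t : tracial_star M) (x : M) : R :=
  Num.sqrt (complex.Re (tau t (star t x * x))).

Definition commr (R : realType) (M : algType R[i]) (x y : M) : M := x * y - y * x.

Definition unitaryM (R : realType) (M : algType R[i]) (t : tracial_star M) (u : M) : Prop :=
  star t u * u = 1 /\ u * star t u = 1.

Definition unitary_hom (R : realType) (G : finGroupType) (M : algType R[i])
    (t : tracial_star M) (U : G -> M) : Prop :=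
  (forall g, unitaryM t (U g)) /\ (forall g1 g2, U (g1 * g2)%g = U g1 * U g2).

(* For fixed x in M, conjugation by W makes the elements W(g) x W(g)^* (g in G)
   into a unitary representation of G in which moving x by g costs exactly
   ||[W(g), x]||_2.  We realise it on the functions f : G -> C, acting by left
   translation, with the inner product eps <f1, f2>_{l^2} + tau((T f2)^* (T f1))
   where T f = sum_g f(g) W(g) x W(g)^*; the eps term makes the form definite and
   is sent to 0 at the end.  In a unitary representation of a finite group the
   mean of an orbit is the projection onto the invariant vectors, and
   sum_g ||pi(g) xi - xi||^2 = 2 |G| ||xi - P xi||^2, so any admissible k for mu
   gives E_g ||[W(g), x]||_2^2 <= k sum_g mu(g) ||[W(g), x]||_2^2.  Applying this in
   A with x = V(b) and in B with x = U(a) and averaging yields the theorem. *)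

From HB Require Import structures.
From mathcomp Require Import all_boot all_order all_algebra all_fingroup.
From mathcomp Require Import complex.
From mathcomp Require Import boolp classical_sets reals constructive_ereal ereal.
From mathcomp Require Import topology normedtype.
From mathcomp.algebra_tactics Require Import ring lra.
Import Order.TTheory GRing.Theory Num.Theory.
Import numFieldNormedType.Exports.
Set Implicit Arguments.
Unset Strict Implicit.
Unset Printing Implicit Defensive.
Local Open Scope ring_scope.

(* Unqualified [Re] and [Im] would denote the generic ['Re] and ['Im] of
   numClosedFieldType. *)
Local Notation Re := complex.Re.
Local Notation Im := complex.Im.

Lemma le_of_le_addM (R : realFieldType) (x y c : R) :
  (forall eps, 0 < eps -> x <= y + eps * c) -> x <= y.
Proof.
move=> le_xy; apply/ler_addgt0Pr => e e0.
have c1 : 0 < `|c| + 1 by rewrite ltr_wpDl.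
apply: le_trans (le_xy _ (divr_gt0 e0 c1)) _; rewrite lerD2l.
by rewrite mulrAC ler_pdivrMr //; have := ler_norm c; nra.
Qed.

Lemma sqrt_lt_sqr (R : rcfType) (a e : R) : 0 < e -> (Num.sqrt a < e) = (a < e ^+ 2).
Proof. by move=> e0; rewrite -[RHS]ltr_sqrt ?exprn_gt0 // sqrtr_sqr gtr0_norm. Qed.

Lemma sqr_le_of_norm_le (R : realDomainType) (a d : R) : `|a| <= d -> a ^+ 2 <= d ^+ 2.
Proof. by rewrite ler_norml => /andP[]; nra. Qed.

Lemma cauchy_cvgn (R : realType) (a : nat -> R) :
  (forall e, 0 < e -> exists N : nat, forall m n : nat, (N <= m)%N -> (N <= n)%N ->
     `|a m - a n| < e) ->
  cvgn a.
Proof.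
move=> a_cauchy; apply: cauchy_cvg; apply: cauchy_exP => e e0.
have [N HN] := a_cauchy e e0.
exists (a N); exists N => // n /= Nn.
by rewrite -ball_normE /ball_ /=; apply: HN.
Qed.

Lemma cauchy_dominated (R : rcfType) (eps : R) (a : nat -> R) (b : nat -> nat -> R) :
  0 < eps -> (forall m n, eps * (a m - a n) ^+ 2 <= b m n) ->
  (forall e, 0 < e -> exists N : nat, forall m n : nat, (N <= m)%N -> (N <= n)%N ->
     Num.sqrt (b m n) < e) ->
  forall e, 0 < e -> exists N : nat, forall m n : nat, (N <= m)%N -> (N <= n)%N ->
     `|a m - a n| < e.
Proof.
move=> eps0 dom b_cauchy e e0.
have e_eps0 : 0 < e * Num.sqrt eps by rewrite mulr_gt0 ?sqrtr_gt0.
have [N HN] := b_cauchy _ e_eps0; exists N => m n Nm Nn.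
have := HN m n Nm Nn; rewrite sqrt_lt_sqr // exprMn sqr_sqrtr ?ltW // => lt_b.
rewrite -sqrtr_sqr sqrt_lt_sqr // -(ltr_pM2l eps0).
by apply: le_lt_trans (dom m n) _; rewrite mulrC.
Qed.

Section ComplexFacts.
Variable R : rcfType.
Implicit Types (x d : R) (z c : R[i]).

Lemma Re_conj z : Re z^* = Re z.
Proof. by case: z. Qed.

Lemma Re_realM x z : Re ((x%:C)%C * z) = x * Re z.
Proof. by case: z => a b /=; rewrite mul0r subr0. Qed.

Lemma Re_ge0 z : 0 <= z -> 0 <= Re z.
Proof. by rewrite lecE => /andP[]. Qed.

Lemma Re_mul_conj z : Re (z * z^*) = Re z ^+ 2 + Im z ^+ 2.
Proof. by case: z => a b /=; ring. Qed.

Lemma sum_mul_conj_ge0 (I : finType) (f : I -> R[i]) : 0 <= \sum_i f i * (f i)^*.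
Proof. by apply: sumr_ge0 => i _; apply: mul_conjC_ge0. Qed.

Lemma conj_realC x : ((x%:C)%C)^* = (x%:C)%C :> R[i].
Proof. exact: conjc_real. Qed.

Lemma natC_inv n : (n%:R^-1 : R[i]) = ((n%:R^-1 : R)%:C)%C.
Proof. by rewrite fmorphV rmorph_nat. Qed.

Lemma Re_conj_mulr_le z1 z2 c d :
  `|Re z1| <= d -> `|Im z1| <= d -> `|Re z2| <= d -> `|Im z2| <= d ->
  Re (z1^* * z2 * c) <= 2 * d ^+ 2 * (`|Re c| + `|Im c|).
Proof.
case: z1 => p q; case: z2 => r s; case: c => cr ci /= hp hq hr hs.
have prod_le a b : `|a| <= d -> `|b| <= d -> `|a * b| <= d ^+ 2.
  by move=> ha hb; rewrite normrM expr2 ler_pM.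
have hA : `|p * r + q * s| <= 2 * d ^+ 2.
  apply: le_trans (ler_normD _ _) _.
  by have := prod_le _ _ hp hr; have := prod_le _ _ hq hs; lra.
have hB : `|p * s - q * r| <= 2 * d ^+ 2.
  apply: le_trans (ler_normB _ _) _.
  by have := prod_le _ _ hp hs; have := prod_le _ _ hq hr; lra.
have h1 : (p * r + q * s) * cr <= 2 * d ^+ 2 * `|cr|.
  by apply: le_trans (ler_norm _) _; rewrite normrM ler_wpM2r.
have h2 : - ((p * s - q * r) * ci) <= 2 * d ^+ 2 * `|ci|.
  by apply: le_trans (ler_norm _) _; rewrite normrN normrM ler_wpM2r.
have -> : (p * r - - q * s) * cr - (p * s + - q * r) * ci
   = (p * r + q * s) * cr - ((p * s - q * r) * ci) by ring.
lra.
Qed.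

End ComplexFacts.

Definition l2_sqnorm (R : rcfType) (I : finType) (f : {ffun I -> R[i]}) : R :=
  \sum_i (Re (f i) ^+ 2 + Im (f i) ^+ 2).

Lemma l2_sqnorm_ge0 (R : rcfType) (I : finType) (f : {ffun I -> R[i]}) :
  0 <= l2_sqnorm f.
Proof. by apply: sumr_ge0 => i _; rewrite addr_ge0 ?sqr_ge0. Qed.

Section FfunCompleteness.
Variables (R : realType) (I : finType) (q : {ffun I -> R[i]} -> R) (eps K : R).
Hypotheses (eps_gt0 : 0 < eps) (K_ge0 : 0 <= K).
Hypothesis q_coord : forall (f : {ffun I -> R[i]}) i,
  eps * (Re (f i) ^+ 2 + Im (f i) ^+ 2) <= q f.
Hypothesis q_bound : forall (f : {ffun I -> R[i]}) d,
  (forall i, `|Re (f i)| <= d /\ `|Im (f i)| <= d) -> q f <= d ^+ 2 * K.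

Lemma ffun_complete (u : nat -> {ffun I -> R[i]}) :
  (forall e, 0 < e -> exists N : nat, forall m n : nat, (N <= m)%N -> (N <= n)%N ->
     Num.sqrt (q (u m - u n)) < e) ->
  exists l, forall e, 0 < e -> exists N : nat, forall n : nat, (N <= n)%N ->
     Num.sqrt (q (u n - l)) < e.
Proof.
move=> u_cauchy.
have coord_cvg (p : R[i] -> R) i :
    (forall m n, eps * (p (u m i) - p (u n i)) ^+ 2 <= q (u m - u n)) ->
    cvgn (fun n => p (u n i)).
  by move=> dom; apply/cauchy_cvgn/(cauchy_dominated eps_gt0 dom).
have Re_cvg i : cvgn (fun n => Re (u n i)).
  apply: coord_cvg => m n; apply: le_trans (q_coord _ i).
  by rewrite !ffunE !raddfB ler_pM2l // lerDl sqr_ge0.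
have Im_cvg i : cvgn (fun n => Im (u n i)).
  apply: coord_cvg => m n; apply: le_trans (q_coord _ i).
  by rewrite !ffunE !raddfB ler_pM2l // lerDr sqr_ge0.
exists [ffun i => (limn (fun n => Re (u n i)) +i* limn (fun n => Im (u n i)))%C] => e e0.
have K1 : 0 < K + 1 by rewrite ltr_wpDl.
pose d := e / (K + 1).
have d0 : 0 < d by rewrite divr_gt0.
have : \forall n \near (\oo)%classic, forall i,
    `|Re (u n i) - limn (fun n => Re (u n i))| <= d /\
    `|Im (u n i) - limn (fun n => Im (u n i))| <= d.
  apply: filter_forall => i.
  have /cvgrPdist_lt/(_ d d0) := Re_cvg i; have /cvgrPdist_lt/(_ d d0) := Im_cvg i.
  by apply: filterS2 => n hIm hRe; split; rewrite distrC ltW.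
case=> N _ HN; exists N => n Nn; rewrite sqrt_lt_sqr //.
apply: le_lt_trans (q_bound (f := u n - _) (d := d) _) _.
  by move=> i; rewrite !ffunE !raddfB; apply: HN.
rewrite /d expr_div_n mulrAC ltr_pdivrMr ?exprn_gt0 //.
have e2 : 0 < e ^+ 2 by rewrite exprn_gt0.
rewrite ltr_pM2l // sqrrD1; have := sqr_ge0 K; lra.
Qed.

End FfunCompleteness.

Section HilbertSpace.
Variables (R : realType) (H : lmodType R[i]) (h : hilbert H).

Lemma ipDl x y z : ip h (x + y) z = ip h x z + ip h y z.
Proof. by have := ip_linear h 1 x y z; rewrite scale1r mul1r. Qed.

Lemma ip0l z : ip h 0 z = 0.
Proof. by apply: (addrI (ip h 0 z)); rewrite -ipDl !addr0. Qed.

Lemma ipZl a x z : ip h (a *: x) z = a * ip h x z.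
Proof. by have := ip_linear h a x 0 z; rewrite addr0 ip0l addr0. Qed.

Lemma ipBl x y z : ip h (x - y) z = ip h x z - ip h y z.
Proof. by rewrite ipDl -scaleN1r ipZl mulN1r. Qed.

Lemma ip_suml (I : finType) (F : I -> H) z :
  ip h (\sum_i F i) z = \sum_i ip h (F i) z.
Proof. by elim/big_rec2: _ => [|i a b _ <-]; [exact: ip0l | exact: ipDl]. Qed.

Lemma ipBr x y z : ip h x (y - z) = ip h x y - ip h x z.
Proof.
by rewrite (ip_conj h y x) (ip_conj h z x) (ip_conj h (y - z) x) ipBl rmorphB.
Qed.

Lemma hnorm_sqr x : hnorm h x ^+ 2 = Re (ip h x x).
Proof. by rewrite /hnorm sqr_sqrtr // Re_ge0 // ip_ge0. Qed.

End HilbertSpace.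

Lemma card_neq0 (G : finGroupType) (K : numDomainType) : (#|G|%:R : K) != 0.
Proof. by rewrite pnatr_eq0 -lt0n; apply/card_gt0P; exists 1%g. Qed.

Section OrbitMean.
Variables (R : realType) (G : finGroupType) (H : lmodType R[i]) (h : hilbert H).
Variable pi : G -> H -> H.
Hypothesis pi_unitary : unitary_rep h pi.

Lemma rep_linear g : linear (pi g).
Proof. by case: pi_unitary => lin _ _ _ _; apply: lin. Qed.

HB.instance Definition _ g := GRing.isLinear.Build R[i] H H *:%R (pi g) (rep_linear g).

Definition orbit_mean (xi : H) : H := (#|G|%:R^-1 : R[i]) *: \sum_(g : G) pi g xi.

Lemma orbit_mean_invariant xi g : pi g (orbit_mean xi) = orbit_mean xi.
Proof.
have [_ _ _ _ piM] := pi_unitary.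
rewrite linearZ raddf_sum /=; congr (_ *: _).
under eq_bigr do rewrite -piM.
by rewrite [RHS](reindex_inj (mulgI g)).
Qed.

Lemma orbit_mean_orth xi zeta :
  (forall g, pi g zeta = zeta) -> ip h (xi - orbit_mean xi) zeta = 0.
Proof.
have [_ pi_ip _ _ _] := pi_unitary.
move=> zeta_inv; rewrite ipBl ipZl ip_suml.
under eq_bigr => g _ do rewrite -{1}(zeta_inv g) pi_ip.
by rewrite sumr_const -[ip h xi zeta *+ _]mulr_natl mulrA mulVf ?card_neq0 // mul1r subrr.
Qed.

Lemma sum_sqr_displacement xi :
  \sum_(g : G) hnorm h (pi g xi - xi) ^+ 2
    = #|G|%:R * (2 * hnorm h (xi - orbit_mean xi) ^+ 2).
Proof.
have [_ pi_ip _ _ _] := pi_unitary.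
have displacement g : hnorm h (pi g xi - xi) ^+ 2
    = 2 * Re (ip h xi xi) - 2 * Re (ip h (pi g xi) xi).
  rewrite hnorm_sqr !ipBl !ipBr pi_ip (ip_conj h (pi g xi) xi) !raddfB /= Re_conj.
  lra.
have deviation : hnorm h (xi - orbit_mean xi) ^+ 2
    = Re (ip h xi xi) - #|G|%:R^-1 * \sum_(g : G) Re (ip h (pi g xi) xi).
  rewrite hnorm_sqr ipBr (orbit_mean_orth xi (orbit_mean_invariant xi)) subr0 ipBl.
  by rewrite raddfB /= ipZl ip_suml natC_inv Re_realM raddf_sum.
under eq_bigr do rewrite displacement.
rewrite sumrB sumr_const -mulr_sumr deviation -mulr_natr.
by field; exact: card_neq0.
Qed.

Lemma admissible_mean_le (mu : G -> R) k xi :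
  kappa_admissible mu k ->
  #|G|%:R^-1 * \sum_(g : G) hnorm h (pi g xi - xi) ^+ 2
    <= k * \sum_(g : G) mu g * hnorm h (pi g xi - xi) ^+ 2.
Proof.
move=> /(_ H h pi pi_unitary xi _ (orbit_mean_invariant xi) (@orbit_mean_orth xi)).
rewrite sum_sqr_displacement mulKf ?card_neq0 //.
set S := \sum_(g : G) _; lra.
Qed.

End OrbitMean.

Section TracialAlgebra.
Variables (R : realType) (M : algType R[i]) (t : tracial_star M).

HB.instance Definition _ := GRing.isLinear.Build R[i] M R[i] *%R (tau t) (@tau_linear R M t).

Lemma star_is_zmod_morphism : {morph star t : x y / x - y}.
Proof. by move=> x y; rewrite starD -scaleN1r starZ rmorphN1 scaleN1r. Qed.

HB.instance Definition _ := GRing.isZmodMorphism.Build M M (star t) star_is_zmod_morphism.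

Lemma star1 : star t 1 = 1.
Proof. by have := starM t (star t 1) 1; rewrite mulr1 !starK mulr1 => <-. Qed.

Lemma tau_star_conj x y : tau t (star t y * x) = (tau t (star t x * y))^*.
Proof.
have Im0 z : Im (tau t (star t z * z)) = 0 by apply/ger0_Im/tau_pos.
have := Im0 (x + y); have := Im0 (x + 'i%C *: y); have := Im0 x; have := Im0 y.
rewrite !raddfD /= !starZ !mulrDl !mulrDr -!scalerAl -!scalerAr !raddfD /= !linearZ /=.
case: (tau t (star t x * x)) => a1 b1; case: (tau t (star t y * y)) => a2 b2.
case: (tau t (star t x * y)) => a3 b3; case: (tau t (star t y * x)) => a4 b4 /= -> -> E1 E2.
by apply/eqP; rewrite eq_complex /=; apply/andP; split; apply/eqP; lra.
Qed.

Lemma tau_unitary_conj u a b : unitaryM t u ->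
  tau t (star t (u * a * star t u) * (u * b * star t u)) = tau t (star t a * b).
Proof.
move=> [u_isometry _].
rewrite !starM starK -!mulrA (mulrA (star t u) u) u_isometry mul1r.
by rewrite tauC -!mulrA u_isometry mulr1.
Qed.

Lemma tau_unitary_mulr u c : unitaryM t u ->
  tau t (star t (c * star t u) * (c * star t u)) = tau t (star t c * c).
Proof.
by move=> [u_isometry _]; rewrite starM starK -!mulrA tauC -!mulrA u_isometry mulr1.
Qed.

Lemma norm2_sqr x : norm2 t x ^+ 2 = Re (tau t (star t x * x)).
Proof. by rewrite /norm2 sqr_sqrtr // Re_ge0 // tau_pos. Qed.

Lemma norm2_commrC x y : norm2 t (commr x y) = norm2 t (commr y x).
Proof. by rewrite /norm2 /commr -opprB raddfN mulNr mulrN opprK. Qed.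

Lemma unitary_hom1 (G : finGroupType) (W : G -> M) : unitary_hom t W -> W 1%g = 1.
Proof.
move=> [W_unitary WM]; have [W1_isometry _] := W_unitary 1%g.
have W1_idem : W 1%g = W 1%g * W 1%g by rewrite -WM mulg1.
by rewrite -[LHS]mul1r -W1_isometry -mulrA -W1_idem.
Qed.

End TracialAlgebra.

Definition left_reg (G : finGroupType) (T : Type) (g : G) (f : {ffun G -> T}) :
  {ffun G -> T} := [ffun h => f (g^-1 * h)%g].

Definition delta1 (G : finGroupType) (K : pzRingType) : {ffun G -> K} :=
  [ffun g => (g == 1%g)%:R].
Arguments delta1 {G K}.

Section ConjugationOrbit.
Variables (R : realType) (G : finGroupType) (M : algType R[i]) (t : tracial_star M).
Variables (W : G -> M) (x : M).

Definition conj_orbit (g : G) : M := W g * x * star t (W g).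

Definition orbit_comb (f : {ffun G -> R[i]}) : M := \sum_(g : G) f g *: conj_orbit g.

Lemma orbit_comb_is_linear : linear orbit_comb.
Proof.
move=> a f1 f2; rewrite /orbit_comb scaler_sumr -big_split /=; apply: eq_bigr => g _.
by rewrite !ffunE scalerDl scalerA.
Qed.

HB.instance Definition _ :=
  GRing.isLinear.Build R[i] {ffun G -> R[i]} M *:%R orbit_comb orbit_comb_is_linear.

Definition orbit_gram (g h : G) : R[i] := tau t (star t (conj_orbit g) * conj_orbit h).

Lemma tau_orbit_comb (f : {ffun G -> R[i]}) :
  tau t (star t (orbit_comb f) * orbit_comb f)
    = \sum_(g : G) \sum_(h : G) (f g)^* * f h * orbit_gram g h.
Proof.
rewrite /orbit_comb raddf_sum /= mulr_suml raddf_sum; apply: eq_bigr => g _.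
rewrite mulr_sumr raddf_sum /=; apply: eq_bigr => h _.
by rewrite starZ -scalerAl -scalerAr scalerA linearZ.
Qed.

Variable eps : R.

Definition orbit_ip (f1 f2 : {ffun G -> R[i]}) : R[i] :=
  (eps%:C)%C * \sum_(g : G) f1 g * (f2 g)^* + tau t (star t (orbit_comb f2) * orbit_comb f1).

Lemma Re_orbit_ip (f : {ffun G -> R[i]}) :
  Re (orbit_ip f f) = eps * l2_sqnorm f + Re (tau t (star t (orbit_comb f) * orbit_comb f)).
Proof.
rewrite raddfD /= Re_realM raddf_sum; congr (_ * _ + _).
by apply: eq_bigr => g _; apply: Re_mul_conj.
Qed.

Lemma orbit_ip_linear a f1 f2 f3 :
  orbit_ip (a *: f1 + f2) f3 = a * orbit_ip f1 f3 + orbit_ip f2 f3.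
Proof.
rewrite /orbit_ip linearP /= mulrDr -scalerAr raddfD /= linearZ /=.
have -> : \sum_(g : G) (a *: f1 + f2) g * (f3 g)^*
    = a * \sum_(g : G) f1 g * (f3 g)^* + \sum_(g : G) f2 g * (f3 g)^*.
  rewrite mulr_sumr -big_split /=; apply: eq_bigr => g _.
  by rewrite !ffunE mulrDl mulrA.
ring.
Qed.

Lemma orbit_ip_conj f1 f2 : orbit_ip f2 f1 = (orbit_ip f1 f2)^*.
Proof.
rewrite /orbit_ip rmorphD rmorphM rmorph_sum /= conj_realC -tau_star_conj.
by congr (_ * _ + _); apply: eq_bigr => g _; rewrite rmorphM /= conjCK mulrC.
Qed.

Hypothesis eps_gt0 : 0 < eps.

Lemma orbit_ip_ge0 f : 0 <= orbit_ip f f.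
Proof. by rewrite addr_ge0 ?tau_pos ?mulr_ge0 ?sum_mul_conj_ge0 // ler0c ltW. Qed.

Lemma orbit_ip_eq0 f : orbit_ip f f = 0 -> f = 0.
Proof.
have l2_ge0 : 0 <= (eps%:C)%C * \sum_(g : G) f g * (f g)^*.
  by rewrite mulr_ge0 ?sum_mul_conj_ge0 // ler0c ltW.
move=> /eqP; rewrite paddr_eq0 ?tau_pos //.
case/andP; rewrite mulf_eq0 => /orP[|/eqP l2_0 _].
  by rewrite -(rmorph0 (real_complex R)) (inj_eq (@complexI _)) gt_eqF.
apply/ffunP => g; rewrite ffunE; apply/eqP; rewrite -mul_conjC_eq0; apply/eqP.
exact: (psumr_eq0P (fun h _ => mul_conjC_ge0 (f h)) l2_0).
Qed.

Lemma orbit_ip_coord (f : {ffun G -> R[i]}) g :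
  eps * (Re (f g) ^+ 2 + Im (f g) ^+ 2) <= Re (orbit_ip f f).
Proof.
rewrite Re_orbit_ip -[X in X <= _]addr0 lerD ?Re_ge0 ?tau_pos // ler_pM2l //.
rewrite /l2_sqnorm (bigD1 g) //= lerDl.
by apply: sumr_ge0 => h _; rewrite addr_ge0 ?sqr_ge0.
Qed.

Definition orbit_const : R :=
  2 * eps * #|G|%:R + 2 * \sum_(g : G) \sum_(h : G)
     (`|Re (orbit_gram g h)| + `|Im (orbit_gram g h)|).

Lemma orbit_const_ge0 : 0 <= orbit_const.
Proof.
rewrite addr_ge0 ?mulr_ge0 ?(ltW eps_gt0) //.
by apply: sumr_ge0 => g _; apply: sumr_ge0 => h _; rewrite addr_ge0.
Qed.

Lemma orbit_ip_bound (f : {ffun G -> R[i]}) d :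
  (forall g, `|Re (f g)| <= d /\ `|Im (f g)| <= d) ->
  Re (orbit_ip f f) <= d ^+ 2 * orbit_const.
Proof.
move=> f_le; rewrite Re_orbit_ip tau_orbit_comb raddf_sum /orbit_const.
have l2_le : l2_sqnorm f <= 2 * d ^+ 2 * #|G|%:R.
  rewrite mulr_natr -sumr_const; apply: ler_sum => g _.
  have [/sqr_le_of_norm_le ? /sqr_le_of_norm_le ?] := f_le g; lra.
have tau_le : \sum_(g : G) Re (\sum_(h : G) (f g)^* * f h * orbit_gram g h)
    <= 2 * d ^+ 2 * \sum_(g : G) \sum_(h : G)
         (`|Re (orbit_gram g h)| + `|Im (orbit_gram g h)|).
  rewrite mulr_sumr; apply: ler_sum => g _; rewrite raddf_sum mulr_sumr.
  apply: ler_sum => h _; have [? ?] := f_le g; have [? ?] := f_le h.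
  exact: Re_conj_mulr_le.
have := ler_wpM2l (ltW eps_gt0) l2_le; lra.
Qed.

Definition orbit_hilbert : hilbert {ffun G -> R[i]} :=
  Hilbert orbit_ip_linear orbit_ip_conj orbit_ip_ge0 orbit_ip_eq0
    (@ffun_complete R G (fun f => Re (orbit_ip f f)) eps orbit_const
       eps_gt0 orbit_const_ge0 orbit_ip_coord orbit_ip_bound).

Hypothesis W_unitary : unitary_hom t W.

Lemma orbit_comb_left_reg g f :
  orbit_comb (left_reg g f) = W g * orbit_comb f * star t (W g).
Proof.
have [_ WM] := W_unitary.
rewrite /orbit_comb (reindex_inj (mulgI g)) /= mulr_sumr mulr_suml.
apply: eq_bigr => h _; rewrite ffunE mulKg -scalerAr -scalerAl.
by rewrite /conj_orbit WM starM !mulrA.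
Qed.

Lemma left_reg_unitary : unitary_rep orbit_hilbert (@left_reg G R[i]).
Proof.
split.
- by move=> g a f1 f2; apply/ffunP => h; rewrite !ffunE.
- move=> g f1 f2; rewrite /= /orbit_ip !orbit_comb_left_reg tau_unitary_conj.
    2: exact: (proj1 W_unitary g).
  congr (_ * _ + _); rewrite [LHS](reindex_inj (mulgI g)).
  by apply: eq_bigr => h _; rewrite !ffunE mulKg.
- by move=> g f; exists (left_reg g^-1 f); apply/ffunP => h; rewrite !ffunE invgK mulKVg.
- by move=> f; apply/ffunP => h; rewrite !ffunE invg1 mul1g.
- by move=> g1 g2 f; apply/ffunP => h; rewrite !ffunE invMg mulgA.
Qed.

Lemma orbit_comb_delta1 : orbit_comb delta1 = x.
Proof.
rewrite /orbit_comb (bigD1 1%g) //= big1 ?addr0 => [|g /negbTE g_neq1].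
  by rewrite ffunE eqxx scale1r /conj_orbit (unitary_hom1 W_unitary) star1 mulr1 mul1r.
by rewrite ffunE g_neq1 scale0r.
Qed.

Lemma hnorm_left_reg_delta1 g :
  hnorm orbit_hilbert (left_reg g delta1 - delta1) ^+ 2
    = eps * l2_sqnorm (left_reg g delta1 - delta1) + norm2 t (commr (W g) x) ^+ 2.
Proof.
have [_ Wg_coisometry] := proj1 W_unitary g.
rewrite hnorm_sqr /= Re_orbit_ip raddfB /= orbit_comb_left_reg orbit_comb_delta1.
have -> : W g * x * star t (W g) - x = commr (W g) x * star t (W g).
  by rewrite /commr mulrBl -(mulrA x) Wg_coisometry mulr1.
by rewrite tau_unitary_mulr ?norm2_sqr //; apply: (proj1 W_unitary g).
Qed.

End ConjugationOrbit.

Lemma commutator_mean_le_admissible (R : realType) (G : finGroupType) (M : algType R[i])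
    (t : tracial_star M) (mu : G -> R) (W : G -> M) (x : M) (k : R) :
  unitary_hom t W -> kappa_admissible mu k ->
  #|G|%:R^-1 * \sum_(g : G) norm2 t (commr (W g) x) ^+ 2
    <= k * \sum_(g : G) mu g * norm2 t (commr (W g) x) ^+ 2.
Proof.
move=> W_unitary k_adm.
pose c g := l2_sqnorm (left_reg g delta1 - delta1 : {ffun G -> R[i]}).
apply: (@le_of_le_addM _ _ _ (k * \sum_(g : G) mu g * c g)) => eps eps_gt0.
have := admissible_mean_le (left_reg_unitary x eps_gt0 W_unitary) delta1 k_adm.
under eq_bigr do rewrite hnorm_left_reg_delta1 //.
under [X in _ <= _ * X -> _]eq_bigr do rewrite hnorm_left_reg_delta1 // mulrDr mulrCA.
rewrite !big_split /= -!mulr_sumr !mulrDr mulrCA.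
have : 0 <= #|G|%:R^-1 * (eps * \sum_(g : G) c g).
  by rewrite !mulr_ge0 ?invr_ge0 ?(ltW eps_gt0) ?sumr_ge0 // => g _; apply: l2_sqnorm_ge0.
lra.
Qed.

Lemma kappa_ge0 (R : realType) (G : finGroupType) (mu : G -> R) (k : R) :
  kappa mu = k%:E -> 0 <= k.
Proof.
rewrite -lee_fin => <-; apply: le_ereal_inf_tmp => _ [k' [k'_ge0 _] <-].
by rewrite lee_fin.
Qed.

Lemma kappa_lt_admissible (R : realType) (G : finGroupType) (mu : G -> R) (k e : R) :
  kappa mu = k%:E -> 0 < e -> exists k', kappa_admissible mu k' /\ k' < k + e.
Proof.
move=> kappa_k e_gt0.
have : (kappa mu < (k + e)%:E)%E by rewrite kappa_k lte_fin ltrDl.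
by case/ereal_inf_lt => _ [k' [_ k'_adm] <-]; rewrite lte_fin; exists k'.
Qed.

Lemma commutator_mean_le_kappa (R : realType) (G : finGroupType) (M : algType R[i])
    (t : tracial_star M) (mu : G -> R) (W : G -> M) (x : M) (k : R) :
  (forall g, 0 <= mu g) -> unitary_hom t W -> kappa mu = k%:E ->
  #|G|%:R^-1 * \sum_(g : G) norm2 t (commr (W g) x) ^+ 2
    <= k * \sum_(g : G) mu g * norm2 t (commr (W g) x) ^+ 2.
Proof.
move=> mu_ge0 W_unitary kappa_k.
set S := \sum_(g : G) _ * _.
have S_ge0 : 0 <= S by apply: sumr_ge0 => g _; rewrite mulr_ge0 ?sqr_ge0.
apply: (@le_of_le_addM _ _ _ S) => e e_gt0.
have [k' [k'_adm k'_lt]] := kappa_lt_admissible kappa_k e_gt0.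
apply: le_trans (commutator_mean_le_admissible x W_unitary k'_adm) _.
by rewrite -mulrDl ler_wpM2r // ltW.
Qed.

Lemma mean2_le_mul (R : realFieldType) (A B : finType) (mu : A -> R) (nu : B -> R)
    (F : A -> B -> R) (k1 k2 : R) :
  0 <= k1 -> (forall a, 0 <= mu a) ->
  (forall a, #|B|%:R^-1 * \sum_b F a b <= k2 * \sum_b nu b * F a b) ->
  (forall b, #|A|%:R^-1 * \sum_a F a b <= k1 * \sum_a mu a * F a b) ->
  (#|A|%:R * #|B|%:R)^-1 * \sum_a \sum_b F a b
    <= k1 * k2 * \sum_a \sum_b mu a * nu b * F a b.
Proof.
move=> k1_ge0 mu_ge0 le_B le_A.
have -> : (#|A|%:R * #|B|%:R)^-1 * \sum_a \sum_b F a b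
    = #|B|%:R^-1 * \sum_b (#|A|%:R^-1 * \sum_a F a b).
  rewrite exchange_big invfM !mulr_sumr; apply: eq_bigr => b _.
  by rewrite !mulr_sumr; apply: eq_bigr => a _; ring.
apply: le_trans (ler_wpM2l _ (ler_sum _ (fun b _ => le_A b))) _; first by rewrite invr_ge0.
have -> : #|B|%:R^-1 * \sum_b (k1 * \sum_a mu a * F a b)
    = k1 * \sum_a mu a * (#|B|%:R^-1 * \sum_b F a b).
  rewrite [LHS]mulr_sumr; under [LHS]eq_bigr do rewrite !mulr_sumr.
  rewrite [LHS]exchange_big [RHS]mulr_sumr; apply: eq_bigr => a _.
  by rewrite !mulr_sumr; apply: eq_bigr => b _; ring.
have -> : k1 * k2 * \sum_a \sum_b mu a * nu b * F a b
    = k1 * \sum_a mu a * (k2 * \sum_b nu b * F a b).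
  rewrite !mulr_sumr; apply: eq_bigr => a _.
  by rewrite !mulr_sumr; apply: eq_bigr => b _; ring.
rewrite ler_wpM2l //; apply: ler_sum => a _.
by apply: ler_wpM2l; [exact: mu_ge0 | exact: le_B].
Qed.

Theorem theorem2p1 (R : realType) (A B : finGroupType) (mu : A -> R) (nu : B -> R)
  (M : algType R[i]) (t : tracial_star M) (U : A -> M) (V : B -> M) :
  prob_measure mu -> prob_measure nu ->
  unitary_hom t U -> unitary_hom t V ->
  forall k1 k2 : R, kappa mu = k1%:E -> kappa nu = k2%:E ->
    (#|A|%:R * #|B|%:R)^-1 *
      (\sum_(a : A) \sum_(b : B) norm2 t (commr (U a) (V b)) ^+ 2)
    <= k1 * k2 *
      (\sum_(a : A) \sum_(b : B) mu a * nu b * norm2 t (commr (U a) (V b)) ^+ 2).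
Proof.
move=> [mu_ge0 _] [nu_ge0 _] U_unitary V_unitary k1 k2 kappa_mu kappa_nu.
apply: (mean2_le_mul (kappa_ge0 kappa_mu) mu_ge0) => [a | b].
- under eq_bigr do rewrite norm2_commrC.
  under [X in _ <= _ * X]eq_bigr do rewrite norm2_commrC.
  exact: commutator_mean_le_kappa nu_ge0 V_unitary kappa_nu.
- exact: commutator_mean_le_kappa mu_ge0 U_unitary kappa_mu.
Qed.
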